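(* For every $\hbar\in H$, the product $\star_\hbar:\mathcal{P}(D_n)\times\mathcal{P}(D_n)\to\mathcal{P}(D_n)$ is continuous with respect to the locally convex topology on $\mathcal{P}(D_n)$ defined by the norms $\|\cdot\|_{D_n,\rho}$ for all $\rho>0$.
   Context: Fix $n\ge1$; indices $\mu,\nu\in\{0,\dots,n\}$. Multi-index conventions: $|P|=\sum P_i$, $P!=\prod P_i!$, $\binom{P}{T}=\prod\binom{P_i}{T_i}$, $\le$ and $\min$ componentwise, $P'=(P_1,\dots,P_n)$ for $P\in\mathbb{N}_0^{1+n}$. $D_n=Z/U(1)$ with $Z=\{r\in\mathbb{C}^{1+n}:-|r^0|^2+\sum_{i\ge1}|r^i|^2=-1\}$ and $U(1)$ acting by scalars; it is identified with the open unit ball of $\mathbb{C}^n$ via $w^i=r^i/r^0$, $w\cdot\bar w=\sum|w^i|^2$. For $P,Q\in\mathbb{N}_0^{1+n}$ with $|P|=|Q|$ let $f_{P,Q}([r])=r^P\bar r^Q=w^{P'}\bar w^{Q'}/(1-w\cdot\bar w)^{|P|}$, and $\mathcal{P}(D_n)$ their span. For $P,Q\in\mathbb{N}_0^n$ let $f_{r,P,Q}=w^P\bar w^Q/(1-w\cdot\bar w)^{\max\{|P|,|Q|\}}$; these form a basis of $\mathcal{P}(D_n)$. For $\rho>0$, $\|\sum a_{P,Q}f_{r,P,Q}\|_{D_n,\rho}=\sum|a_{P,Q}|\rho^{|P+Q|}$. $H=\mathbb{C}\setminus(\{0\}\cup\{-1/(2m):m\in\mathbb{N}\})$; $(z)_m=\prod_{k=0}^{m-1}(z+k)$.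 For $\hbar\in H$, $\star_\hbar$ is the bilinear product on $\mathcal{P}(D_n)$ obtained by reduction of the Wick product: with $d_{P,Q}=z^P\bar z^Q$ on $\mathbb{C}^{1+n}$, $d_{P,Q}\tilde\star_\hbar d_{R,S}=\sum_{T\le\min\{P,S\}}(-1)^{T_0}(2\hbar)^{|T|}T!\binom PT\binom ST d_{P+R-T,Q+S-T}$, and $\Psi_\hbar(d_{P,Q})=(2\hbar)^{|P|}(\frac1{2\hbar})_{|P|}f_{P,Q}$ (for $|P|=|Q|$), one sets $a\star_\hbar b=\Psi_\hbar(a'\tilde\star_\hbar b')$ for any $U(1)$-invariant polynomial preimages $a',b'$ of $a,b$ under $\Psi_\hbar$ (this is well defined). Explicitly $f_{P,Q}\star_\hbar f_{R,S}=\sum_{T\in\mathbb{N}_0^{1+n},T\le\min\{P,S\}}(-1)^{T_0}\frac{(\frac1{2\hbar})_{|P+S-T|}T!}{(\frac1{2\hbar})_{|P|}(\frac1{2\hbar})_{|S|}}\binom PT\binom ST f_{P+R-T,Q+S-T}$. *)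

From HB Require Import structures.
From mathcomp Require Import all_boot all_order all_algebra.
From mathcomp Require Import reals.
From mathcomp Require Import complex.
From mathcomp Require Import finmap.
From mathcomp.multinomials Require Import monalg.

Set Implicit Arguments.
Unset Strict Implicit.
Unset Printing Implicit Defensive.

Import Order.TTheory GRing.Theory Num.Theory.
Local Open Scope ring_scope.

Section Dn.
Variable R : realType.
Local Notation C := (R[i]).
Variable n : nat.

Definition mi (k : nat) := {ffun 'I_k -> nat}.
Definition msum k (P : mi k) : nat := (\sum_(i < k) P i)%N.
(* P' = (P_1,..,P_n) for P in N_0^{1+n}; coordinate 0 is P_0 *)
Definition mtail (P : mi n.+1) : mi n := [ffun i => P (lift ord0 i)].
Definition madd k (P Q : mi k) : mi k := [ffun i => (P i + Q i)%N].
Definition msub k (P Q : mi k) : mi k := [ffun i => (P i - Q i)%N].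
Definition mle k (P Q : mi k) : bool := [forall i, P i <= Q i]%N.
Definition mfact k (P : mi k) : nat := (\prod_(i < k) (P i)`!)%N.
Definition mbinom k (P T : mi k) : nat := (\prod_(i < k) 'C(P i, T i))%N.
Definition munit (l : 'I_n) : mi n := [ffun i => nat_of_bool (i == l)].

(* P(D_n), represented in its basis (f_{r,A,B})_{A,B in N_0^n}:
   an element is a finitely supported family of complex coefficients
   indexed by pairs (A,B). *)
Definition PD := {malg C[(mi n * mi n)%type]}.
Definition fr (A B : mi n) : PD := << (A, B) >>.

Definition normD (rho : R) (a : PD) : R :=
  \sum_(k <- msupp a) Normc.normc (a@_k) * rho ^+ msum (madd k.1 k.2).

(* hexp j A B is the expansion in the basis f_r of the function
   w^A wbar^B / (1 - w.wbar)^(max(|A|,|B|) + j), computed via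
   1/(1-x)^(m+1) = 1/(1-x)^m + x/(1-x)^(m+1), x = sum_l w^l wbar^l. *)
Fixpoint hexp (j : nat) (A B : mi n) : PD :=
  match j with
  | O => fr A B
  | j'.+1 => hexp j' A B
             + \sum_(l < n) hexp j' (madd A (munit l)) (madd B (munit l))
  end.

(* f_{P,Q} = w^{P'} wbar^{Q'} / (1 - w.wbar)^{|P|}  (for |P| = |Q|) *)
Definition fPQ (P Q : mi n.+1) : PD :=
  hexp (msum P - maxn (msum (mtail P)) (msum (mtail Q))) (mtail P) (mtail Q).

Definition poch (z : C) (m : nat) : C := \prod_(k < m) (z + k%:R).

Definition inH (hbar : C) : Prop :=
  hbar != 0 /\ forall m : nat, (0 < m)%N -> hbar != - (1 / (2 * m%:R)).

(* the explicit formula for f_{P,Q} *_hbar f_{R,S}; the sum runs over all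
   T in N_0^{1+n} with T <= min{P,S} (encoded as bounded finite functions) *)
Definition starPQ (hbar : C) (P Q R' S : mi n.+1) : PD :=
  let z := 1 / (2 * hbar) in
  let N := msum P in
  \sum_(t : {ffun 'I_n.+1 -> 'I_N.+1} |
          mle [ffun i => nat_of_ord (t i)] P && mle [ffun i => nat_of_ord (t i)] S)
    let T : mi n.+1 := [ffun i => nat_of_ord (t i)] in
    ((-1) ^+ T ord0 * poch z (msum (msub (madd P S) T)) * (mfact T)%:R
       / (poch z (msum P) * poch z (msum S))
       * (mbinom P T)%:R * (mbinom S T)%:R)
    *: fPQ (msub (madd P R') T) (msub (madd Q S) T).

(* f_{r,A,B} = f_{P,Q} with P = (m-|A|, A), Q = (m-|B|, B), m = max(|A|,|B|) *)
Definition ext (a0 : nat) (A : mi n) : mi n.+1 :=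
  [ffun i => match unlift ord0 i with None => a0 | Some j => A j end].
Definition embP (k : mi n * mi n) : mi n.+1 :=
  ext (maxn (msum k.1) (msum k.2) - msum k.1) k.1.
Definition embQ (k : mi n * mi n) : mi n.+1 :=
  ext (maxn (msum k.1) (msum k.2) - msum k.2) k.2.

Definition star (hbar : C) (a b : PD) : PD :=
  \sum_(k <- msupp a) \sum_(l <- msupp b)
     (a@_k * b@_l) *: starPQ hbar (embP k) (embQ k) (embP l) (embQ l).

(* continuity of *_hbar : P(D_n) x P(D_n) -> P(D_n) for the locally convex
   topology generated by the norms ||.||_{D_n,rho}, rho > 0 (product topology
   on the source), written with the basic neighbourhoods of that topology:
   { x | ||x - x0||_{rho_i} < delta for finitely many rho_i }. *)
Definition star_continuous (hbar : C) : Prop :=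
  forall (a b : PD) (rho eps : R), 0 < rho -> 0 < eps ->
  exists (rhos : seq R) (delta : R),
    [/\ all (fun r => 0 < r) rhos, 0 < delta &
      forall a' b' : PD,
        (forall r, r \in rhos -> normD r (a' - a) < delta /\ normD r (b' - b) < delta) ->
        normD rho (star hbar a' b' - star hbar a b) < eps].

End Dn.

(* Since the product is bilinear, it suffices to bound it: for every rho there
   is E with ||a * b||_rho <= ||a||_E ||b||_E.  Summing over the basis, this
   reduces to an exponential bound E^(|A+B| + |C+D|) for the norm of
   f_{r,A,B} * f_{r,C,D}.  Three estimates give it: ||f_{P,Q}||_r grows like
   ((1 + n r^2) r)^(|P|+|Q|); since z = 1/(2 hbar) avoids the non-positive
   integers, |z + k| >= c (k+1) for some c > 0, so |(z)_m| lies between c^m m!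
   and (|z|+1)^m m! and the coefficients of the product formula are at most
   exponential in |P|+|S|; finally the number of summands is polynomial. *)

From HB Require Import structures.
From mathcomp Require Import all_boot all_order all_algebra.
From mathcomp Require Import reals.
From mathcomp Require Import complex.
From mathcomp Require Import finmap.
From mathcomp.multinomials Require Import monalg.
From mathcomp Require Import zify ring lra.
Set Implicit Arguments.
Unset Strict Implicit.
Unset Printing Implicit Defensive.

Import Order.TTheory GRing.Theory Num.Theory.
Local Open Scope ring_scope.

Lemma leq_mul_fact a b : (a`! * b`! <= (a + b)`!)%N.
Proof.
have := bin_fact (leq_addr b a); rewrite addKn => <-.
by rewrite leq_pmull // bin_gt0 leq_addr.
Qed.

Lemma leq_bin_exp2 m i : ('C(m, i) <= 2 ^ m)%N.
Proof.
elim: m i => [|m IH] [|i] //; first by rewrite bin0 expn_gt0.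
by rewrite binS expnS mul2n -addnn leq_add.
Qed.

Lemma leq_fact_exp2 a b : ((a + b)`! <= 2 ^ (a + b) * (a`! * b`!))%N.
Proof.
have := bin_fact (leq_addr b a); rewrite addKn => <-.
by rewrite leq_mul2r leq_bin_exp2 orbT.
Qed.

Section MultiIndices.
Variable k : nat.
Implicit Types P S T : mi k.

Lemma msum_madd P S : msum (madd P S) = (msum P + msum S)%N.
Proof. by rewrite /msum -big_split /=; apply: eq_bigr => i _; rewrite ffunE. Qed.

Lemma msum_msub_le P S T : (msum (msub (madd P S) T) <= msum P + msum S)%N.
Proof.
by rewrite -msum_madd; apply: leq_sum => i _; rewrite !ffunE leq_subr.
Qed.

Lemma msum_msubK P S T : mle T P ->
  (msum (msub (madd P S) T) + msum T = msum P + msum S)%N.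
Proof.
move=> /forallP leTP; rewrite -msum_madd /msum -big_split /=.
apply: eq_bigr => i _; rewrite !ffunE subnK //.
exact: leq_trans (leTP i) (leq_addr _ _).
Qed.

Lemma mfact_le P : (mfact P <= (msum P)`!)%N.
Proof.
apply: (big_ind2 (fun a b => a <= b`!)%N) => // a1 a2 b1 b2 h1 h2.
exact: leq_trans (leq_mul h1 h2) (leq_mul_fact _ _).
Qed.

Lemma mbinom_le P T : (mbinom P T <= 2 ^ msum P)%N.
Proof.
apply: (big_ind2 (fun a b => a <= 2 ^ b)%N) => // [a1 a2 b1 b2 h1 h2|i _].
  by rewrite expnD leq_mul.
exact: leq_bin_exp2.
Qed.

Lemma fact_mfact_mbinom_le P S T : mle T P ->
  ((msum (msub (madd P S) T))`! * (mfact T * mbinom P T * mbinom S T)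
   <= 4 ^ (msum P + msum S) * ((msum P)`! * (msum S)`!))%N.
Proof.
move=> leTP; set M := (msum P + msum S)%N; set u := msum (msub _ T).
have facts : (u`! * mfact T <= M`!)%N.
  rewrite /M -(@msum_msubK P S T leTP); apply: leq_trans (leq_mul_fact _ _).
  by rewrite leq_mul2l mfact_le orbT.
have binoms : (mbinom P T * mbinom S T <= 2 ^ M)%N.
  by rewrite expnD leq_mul ?mbinom_le.
have -> : (u`! * (mfact T * mbinom P T * mbinom S T)
           = u`! * mfact T * (mbinom P T * mbinom S T))%N by ring.
have -> : (4 ^ M * ((msum P)`! * (msum S)`!)
           = 2 ^ M * ((msum P)`! * (msum S)`!) * 2 ^ M)%N.
  by rewrite -[4%N]/(2 * 2)%N expnMn; ring.
exact: leq_mul (leq_trans facts (leq_fact_exp2 _ _)) binoms.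
Qed.

End MultiIndices.

Lemma ex_pos_lower_bound (R : realDomainType) (q : nat -> R) K :
  (forall k, 0 < q k) -> exists2 c : R, 0 < c & forall k, (k < K)%N -> c <= q k.
Proof.
move=> q_gt0; elim: K => [|K [c c_gt0 le_cq]]; first by exists 1.
exists (Num.min c (q K)); first by rewrite lt_min c_gt0 q_gt0.
move=> k; rewrite ltnS leq_eqVlt => /orP[/eqP->|ltkK].
  by rewrite ge_min lexx orbT.
by rewrite ge_min le_cq.
Qed.

Section ComplexNorm.
Variable R : rcfType.
Local Notation normc := (@Normc.normc R).
Implicit Types x z : R[i].

Lemma normc_ge0 x : 0 <= normc x.
Proof. by case: x => a b; rewrite /Normc.normc sqrtr_ge0. Qed.

Lemma normc_natr m : normc m%:R = m%:R.
Proof. by rewrite normcMn Normc.normc1. Qed.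

Lemma normcX x m : normc (x ^+ m) = normc x ^+ m.
Proof. by elim: m => [|m IH]; rewrite ?Normc.normc1 // !exprS Normc.normcM IH. Qed.

Lemma normc_addn_le z m : normc (z + m%:R) <= normc z + m%:R.
Proof. by apply: le_trans (le_normcD _ _) _; rewrite normc_natr. Qed.

Lemma normc_addn_ge z m : m%:R - normc z <= normc (z + m%:R).
Proof.
have := le_normcD (z + m%:R) (- z).
by rewrite normcN addrC addKr normc_natr lerBlDr.
Qed.

End ComplexNorm.

Section Pochhammer.
Variable R : realType.
Local Notation normc := (@Normc.normc R).
Implicit Types z : R[i].

Lemma poch_recr z m : poch z m.+1 = poch z m * (z + m%:R).
Proof. by rewrite /poch big_ord_recr. Qed.

Lemma normc_poch_le z m : normc (poch z m) <= (normc z + 1) ^+ m * m`!%:R.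
Proof.
elim: m => [|m IH]; first by rewrite /poch big_ord0 Normc.normc1 mul1r.
rewrite poch_recr Normc.normcM factS mulnC natrM exprSr mulrACA.
apply: ler_pM; rewrite ?normc_ge0 //.
apply: le_trans (normc_addn_le _ _) _.
have := normc_ge0 z; have := ler0n R m; rewrite -natr1; nra.
Qed.

Lemma normc_poch_ge z c : 0 <= c ->
  (forall k, c * k.+1%:R <= normc (z + k%:R)) ->
  forall m, c ^+ m * m`!%:R <= normc (poch z m).
Proof.
move=> c_ge0 lin; elim=> [|m IH]; first by rewrite /poch big_ord0 Normc.normc1 mul1r.
rewrite poch_recr Normc.normcM factS mulnC natrM exprSr mulrACA.
by apply: ler_pM; rewrite ?mulr_ge0 ?exprn_ge0.
Qed.

Lemma normc_shift_ge_linear z : (forall k, z + k%:R != 0) ->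
  exists c, [/\ 0 < c, c <= 1 & forall k, c * k.+1%:R <= normc (z + k%:R)].
Proof.
move=> z_shift_neq0.
pose K := Num.bound (2 * normc z + 1).
have ltK : 2 * normc z + 1 < K%:R.
  by apply: archi_boundP; rewrite addr_ge0 ?mulr_ge0 ?normc_ge0.
pose q k := normc (z + k%:R) / k.+1%:R.
have q_gt0 k : 0 < q k.
  rewrite divr_gt0 // lt_def normc_ge0 andbT.
  by apply: contra (z_shift_neq0 k) => /eqP/Normc.eq0_normc->.
have [c0 c0_gt0 le_c0q] := ex_pos_lower_bound K q_gt0.
exists (Num.min c0 (1 / 2)); split => [||k]; first by rewrite lt_min c0_gt0 divr_gt0.
  by rewrite ge_min ler_pdivrMr // mul1r ler1n orbT.
have [ltkK|leKk] := ltnP k K.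
  apply: le_trans (_ : c0 * k.+1%:R <= _).
    by rewrite ler_wpM2r // ge_min lexx.
  by rewrite -ler_pdivlMr // le_c0q.
apply: le_trans (normc_addn_ge _ _).
apply: le_trans (_ : 1 / 2 * k.+1%:R <= _).
  by rewrite ler_wpM2r // ge_min lexx orbT.
have : (K%:R : R) <= k%:R by rewrite ler_nat.
rewrite -[k.+1%:R]natr1; lra.
Qed.

End Pochhammer.

Section StarProduct.
Variables (R : realType) (n : nat).
Local Notation C := R[i].
Local Notation normc := (@Normc.normc R).
Local Notation PD := (PD R n).
Local Notation I := (mi n * mi n)%type.
Implicit Types (a b : PD) (r : R) (hbar : C).

Definition bideg (k : I) : nat := msum (madd k.1 k.2).

Lemma normD_fsubset r a (S : {fset I}) : (msupp a `<=` S)%fset ->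
  normD r a = \sum_(k <- S) normc a@_k * r ^+ bideg k.
Proof.
move=> sub; apply: big_fset_incl => // k _ kNa.
by rewrite mcoeff_outdom // Normc.normc0 mul0r.
Qed.

Lemma normD_ge0 r a : 0 <= r -> 0 <= normD r a.
Proof. by move=> r_ge0; apply: sumr_ge0 => k _; rewrite mulr_ge0 ?normc_ge0 ?exprn_ge0. Qed.

Lemma normD0 r : normD r (0 : PD) = 0.
Proof. by rewrite /normD msupp0 big_seq_fset0. Qed.

Lemma ler_normD_add r a b : 0 <= r -> normD r (a + b) <= normD r a + normD r b.
Proof.
move=> r_ge0.
rewrite (normD_fsubset r (msuppD_le a b)).
rewrite (normD_fsubset r (fsubsetUl (msupp a) (msupp b))).
rewrite (normD_fsubset r (fsubsetUr (msupp a) (msupp b))) -big_split /=.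
apply: ler_sum => k _; rewrite mcoeffD -mulrDl ler_wpM2r ?exprn_ge0 //.
exact: le_normcD.
Qed.

Lemma normDZ r x a : normD r (x *: a) = normc x * normD r a.
Proof.
rewrite (normD_fsubset r (msuppZ_le x a)) /normD mulr_sumr.
by apply: eq_bigr => k _; rewrite mcoeffZ Normc.normcM mulrA.
Qed.

Lemma ler_normD_sum r (J : Type) (s : seq J) (P : pred J) (F : J -> PD) : 0 <= r ->
  normD r (\sum_(j <- s | P j) F j) <= \sum_(j <- s | P j) normD r (F j).
Proof.
move=> r_ge0; elim/big_rec2: _ => [|j y1 y2 _ IH]; first by rewrite normD0.
by apply: le_trans (ler_normD_add _ _ r_ge0) _; rewrite lerD2l.
Qed.

Lemma le_normD_rho r1 r2 a : 0 <= r1 -> r1 <= r2 -> normD r1 a <= normD r2 a.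
Proof.
move=> r1_ge0 le_r12; apply: ler_sum => k _.
by rewrite ler_wpM2l ?normc_ge0 // lerXn2r // nnegrE (le_trans r1_ge0).
Qed.

Lemma msum_munit (l : 'I_n) : msum (munit l) = 1%N.
Proof.
rewrite /msum (bigD1 l) //= big1 ?ffunE ?eqxx // => i /negbTE neq_il.
by rewrite ffunE neq_il.
Qed.

Lemma bideg_munit A B (l : 'I_n) :
  bideg (madd A (munit l), madd B (munit l)) = (bideg (A, B)).+2.
Proof. by rewrite /bideg /= !msum_madd msum_munit; lia. Qed.

(* Each unfolding of [hexp] adds [n] terms of bidegree two higher, whence the
   factor [1 + n r^2]. *)
Lemma normD_hexp_le r j A B : 0 <= r ->
  normD r (hexp R j A B) <= (1 + n%:R * r ^+ 2) ^+ j * r ^+ bideg (A, B).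
Proof.
move=> r_ge0; elim: j A B => [|j IH] A B /=.
  rewrite /fr (normD_fsubset r msuppU_le) big_seq_fset1.
  by rewrite mcoeffUU Normc.normc1 !mul1r.
apply: le_trans (ler_normD_add _ _ r_ge0) _.
apply: le_trans (lerD (IH A B) (ler_normD_sum _ _ _ r_ge0)) _.
apply: le_trans (lerD (lexx _) (ler_sum _ (fun l _ => IH _ _))) _.
under eq_bigr => l _ do rewrite bideg_munit.
rewrite sumr_const card_ord -mulr_natr !exprS le_eqVlt.
by apply/orP; left; apply/eqP; ring.
Qed.

Lemma msum_mtail_le (P : mi n.+1) : (msum (mtail P) <= msum P)%N.
Proof.
rewrite [X in (_ <= X)%N]/msum big_ord_recl /msum.
by under eq_bigr do rewrite ffunE; exact: leq_addl.
Qed.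

Definition basis_growth r := (1 + n%:R * r ^+ 2) * r.

Lemma basis_growth_ge1 r : 1 <= r -> 1 <= basis_growth r.
Proof.
move=> r_ge1; rewrite -[1]mulr1 ler_pM //.
by rewrite lerDl mulr_ge0 ?exprn_ge0 // (le_trans ler01).
Qed.

Lemma normD_fPQ_le r (P Q : mi n.+1) : 1 <= r ->
  normD r (fPQ R P Q) <= basis_growth r ^+ (msum P + msum Q).
Proof.
move=> r_ge1; have r_ge0 : 0 <= r by apply: le_trans r_ge1.
apply: le_trans (normD_hexp_le _ _ _ r_ge0) _.
have one_le : 1 <= 1 + n%:R * r ^+ 2 by rewrite lerDl mulr_ge0 ?exprn_ge0.
rewrite exprMn ler_pM ?exprn_ge0 ?(le_trans ler01) //.
  by rewrite ler_weXn2l //; lia.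
rewrite ler_weXn2l // /bideg msum_madd /=.
by rewrite leq_add ?msum_mtail_le.
Qed.

(* The coefficient of f_{P+R-T,Q+S-T} in [starPQ hbar P Q R S], z = 1/(2 hbar). *)
Definition star_coef (z : C) (P S T : mi n.+1) : C :=
  (-1) ^+ T ord0 * poch z (msum (msub (madd P S) T)) * (mfact T)%:R
  / (poch z (msum P) * poch z (msum S)) * (mbinom P T)%:R * (mbinom S T)%:R.

Definition coef_growth (z : C) (c : R) := 4 * (normc z + 1) / c.

Lemma normc_star_coef_le z c (P S T : mi n.+1) : 0 < c ->
  (forall k, c * k.+1%:R <= normc (z + k%:R)) -> mle T P ->
  normc (star_coef z P S T) <= coef_growth z c ^+ (msum P + msum S).
Proof.
move=> c_gt0 lin leTP; set M := (msum P + msum S)%N.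
pose u := msum (msub (madd P S) T).
pose F := (mfact T * mbinom P T * mbinom S T)%N.
set den := normc (poch z (msum P)) * normc (poch z (msum S)).
have -> : normc (star_coef z P S T) = normc (poch z u) * F%:R / den.
  rewrite /star_coef -/u !Normc.normcM Normc.normcV Normc.normcM normcX normcN.
  by rewrite Normc.normc1 expr1n mul1r !normc_natr /F !natrM; ring.
have c_ge0 := ltW c_gt0; have a_ge1 : 1 <= normc z + 1 by rewrite lerDr normc_ge0.
have den_ge : c ^+ M * ((msum P)`! * (msum S)`!)%:R <= den.
  rewrite exprD natrM mulrACA.
  by apply: ler_pM; rewrite ?mulr_ge0 ?exprn_ge0 ?ler0n ?normc_poch_ge.
have den_gt0 : 0 < den.
  by apply: lt_le_trans den_ge; rewrite mulr_gt0 ?exprn_gt0 // ltr0n muln_gt0 !fact_gt0.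
rewrite ler_pdivrMr //.
apply: le_trans (_ : (normc z + 1) ^+ M * (u`! * F)%:R <= _).
  rewrite natrM mulrA ler_wpM2r // (le_trans (normc_poch_le _ _)) // ler_wpM2r //.
  by rewrite ler_weXn2l // /M -(msum_msubK S leTP) leq_addr.
apply: le_trans (_ : coef_growth z c ^+ M * (c ^+ M * ((msum P)`! * (msum S)`!)%:R) <= _).
  rewrite /coef_growth expr_div_n mulrA divfK ?expf_neq0 ?gt_eqF //.
  rewrite exprMn -mulrA [X in _ <= X]mulrCA ler_wpM2l ?exprn_ge0 ?(le_trans ler01) //.
  by rewrite -natrX -natrM ler_nat fact_mfact_mbinom_le.
apply: ler_wpM2l den_ge.
by rewrite /coef_growth exprn_ge0 // divr_ge0 // mulr_ge0 // addr_ge0 ?normc_ge0.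
Qed.

Lemma normD_starPQ_le hbar r c (P Q R' S : mi n.+1) : 1 <= r -> 0 < c ->
  (forall k, c * k.+1%:R <= normc (1 / (2 * hbar) + k%:R)) ->
  normD r (starPQ hbar P Q R' S) <=
  ((msum P).+1 ^ n.+1)%:R * (coef_growth (1 / (2 * hbar)) c ^+ (msum P + msum S)
    * basis_growth r ^+ (msum P + msum R' + (msum Q + msum S))).
Proof.
move=> r_ge1 c_gt0 lin; have r_ge0 : 0 <= r by apply: le_trans r_ge1.
pose X := coef_growth (1 / (2 * hbar)) c ^+ (msum P + msum S)
  * basis_growth r ^+ (msum P + msum R' + (msum Q + msum S)).
have X_ge0 : 0 <= X.
  rewrite mulr_ge0 ?exprn_ge0 ?(le_trans ler01 (basis_growth_ge1 r_ge1)) //.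
  by rewrite divr_ge0 ?mulr_ge0 ?addr_ge0 ?normc_ge0 ?ltW.
rewrite -/X /starPQ; cbv zeta.
apply: le_trans (ler_normD_sum _ _ _ r_ge0) _.
apply: le_trans (_ : _ <= \sum_(t : {ffun 'I_n.+1 -> 'I_(msum P).+1}) X) _; last first.
  by rewrite sumr_const card_ffun !card_ord mulr_natl.
rewrite big_mkcond.
apply: ler_sum => t _; case: ifP => [/andP[leTP leTS]|_] //.
rewrite normDZ ler_pM ?normc_ge0 ?normD_ge0 ?normc_star_coef_le //.
apply: le_trans (normD_fPQ_le _ _ r_ge1) _.
by rewrite ler_weXn2l ?basis_growth_ge1 // leq_add ?msum_msub_le.
Qed.

Lemma msum_ext (a0 : nat) (A : mi n) : msum (ext a0 A) = (a0 + msum A)%N.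
Proof.
rewrite /msum big_ord_recl !ffunE unlift_none; congr (_ + _)%N.
by apply: eq_bigr => i _; rewrite ffunE liftK.
Qed.

Lemma msum_embP_le k : (msum (embP k) <= bideg k)%N.
Proof.
by rewrite msum_ext subnK ?leq_maxl // /bideg msum_madd geq_max leq_addr leq_addl.
Qed.

Lemma msum_embQ_le k : (msum (embQ k) <= bideg k)%N.
Proof.
by rewrite msum_ext subnK ?leq_maxr // /bideg msum_madd geq_max leq_addr leq_addl.
Qed.

Definition star_growth hbar c r :=
  2 ^+ n.+1 * coef_growth (1 / (2 * hbar)) c * basis_growth r ^+ 2.

Lemma normD_starPQ_emb_le hbar r c k l : 1 <= r -> 0 < c -> c <= 1 ->
  (forall k, c * k.+1%:R <= normc (1 / (2 * hbar) + k%:R)) ->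
  normD r (starPQ hbar (embP k) (embQ k) (embP l) (embQ l))
    <= star_growth hbar c r ^+ (bideg k + bideg l).
Proof.
move=> r_ge1 c_gt0 c_le1 lin; set W := (bideg k + bideg l)%N.
have kP := msum_embP_le k; have kQ := msum_embQ_le k.
have lP := msum_embP_le l; have lQ := msum_embQ_le l.
have D_ge1 : 1 <= coef_growth (1 / (2 * hbar)) c.
  by rewrite ler_pdivlMr //; have := normc_ge0 (1 / (2 * hbar)); lra.
have B_ge1 := basis_growth_ge1 r_ge1.
have D_ge0 := le_trans ler01 D_ge1; have B_ge0 := le_trans ler01 B_ge1.
have count_le : ((msum (embP k)).+1 ^ n.+1 <= (2 ^ n.+1) ^ W)%N.
  rewrite -expnM mulnC expnM leq_exp2r //.
  apply: leq_trans (ltn_expl _ (ltnSn 1)) _.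
  by rewrite leq_pexp2l //; lia.
apply: le_trans (normD_starPQ_le _ _ _ _ r_ge1 c_gt0 lin) _.
rewrite /star_growth -mulrA (exprMn _ (2 ^+ n.+1)) (exprMn _ (coef_growth _ c)).
apply: ler_pM; rewrite ?ler0n ?mulr_ge0 ?exprn_ge0 //.
  by rewrite -!natrX ler_nat.
apply: ler_pM; rewrite ?exprn_ge0 //.
  by rewrite ler_weXn2l //; lia.
by rewrite -exprM ler_weXn2l //; lia.
Qed.

Lemma star_fsubset hbar a b (S T : {fset I}) :
  (msupp a `<=` S)%fset -> (msupp b `<=` T)%fset ->
  star hbar a b = \sum_(k <- S) \sum_(l <- T)
    (a@_k * b@_l) *: starPQ hbar (embP k) (embQ k) (embP l) (embQ l).
Proof.
move=> sub_a sub_b; rewrite /star (big_fset_incl _ sub_a); last first.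
  by move=> k _ kNa; rewrite big1 // => l _; rewrite mcoeff_outdom // mul0r scale0r.
apply: eq_bigr => k _; rewrite (big_fset_incl _ sub_b) //.
by move=> l _ lNb; rewrite (mcoeff_outdom lNb) mulr0 scale0r.
Qed.

Lemma starBl hbar a1 a2 b : star hbar (a1 - a2) b = star hbar a1 b - star hbar a2 b.
Proof.
set S := (msupp a1 `|` msupp a2)%fset.
rewrite (star_fsubset hbar (msuppB_le a1 a2) (fsubset_refl (msupp b))).
rewrite (star_fsubset hbar (fsubsetUl _ _ : _ `<=` S)%fset (fsubset_refl (msupp b))).
rewrite (star_fsubset hbar (fsubsetUr _ _ : _ `<=` S)%fset (fsubset_refl (msupp b))).
rewrite -sumrB; apply: eq_bigr => k _; rewrite -sumrB; apply: eq_bigr => l _.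
by rewrite mcoeffB mulrBl scalerBl.
Qed.

Lemma starBr hbar a b1 b2 : star hbar a (b1 - b2) = star hbar a b1 - star hbar a b2.
Proof.
set T := (msupp b1 `|` msupp b2)%fset.
rewrite (star_fsubset hbar (fsubset_refl (msupp a)) (msuppB_le b1 b2)).
rewrite (star_fsubset hbar (fsubset_refl (msupp a)) (fsubsetUl _ _ : _ `<=` T)%fset).
rewrite (star_fsubset hbar (fsubset_refl (msupp a)) (fsubsetUr _ _ : _ `<=` T)%fset).
rewrite -sumrB; apply: eq_bigr => k _; rewrite -sumrB; apply: eq_bigr => l _.
by rewrite mcoeffB mulrBr scalerBl.
Qed.

Lemma starB hbar a a' b b' :
  star hbar a' b' - star hbar a b = star hbar (a' - a) b' + star hbar a (b' - b).
Proof. by rewrite starBl starBr addrA subrK. Qed.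

Lemma normD_star_le hbar rho E a b : 0 <= rho ->
  (forall k l, normD rho (starPQ hbar (embP k) (embQ k) (embP l) (embQ l))
                 <= E ^+ (bideg k + bideg l)) ->
  normD rho (star hbar a b) <= normD E a * normD E b.
Proof.
move=> rho_ge0 starPQ_le; rewrite [X in _ <= X]big_distrlr /=.
apply: le_trans (ler_normD_sum _ _ _ rho_ge0) _; apply: ler_sum => k _.
apply: le_trans (ler_normD_sum _ _ _ rho_ge0) _; apply: ler_sum => l _.
rewrite normDZ Normc.normcM mulrACA -exprD.
by rewrite ler_wpM2l ?mulr_ge0 ?normc_ge0.
Qed.

Lemma inH_shift_neq0 hbar : inH hbar -> forall k : nat, 1 / (2 * hbar) + k%:R != 0.
Proof.
move=> [hbar_neq0 hbarNH] k; have two_neq0 : (2 : C) != 0 by rewrite pnatr_eq0.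
rewrite addr_eq0 div1r; case: k => [|k]; first by rewrite oppr0 invr_eq0 mulf_neq0.
apply: contra (hbarNH k.+1 isT) => /eqP/(congr1 GRing.inv); rewrite invrK => e.
by apply/eqP; apply: (mulfI two_neq0); rewrite e; field; rewrite addrC natr1 pnatr_eq0.
Qed.

Lemma normD_star_bounded hbar rho : inH hbar -> 0 < rho ->
  exists2 E, 0 < E & forall a b, normD rho (star hbar a b) <= normD E a * normD E b.
Proof.
move=> hbarH rho_gt0.
have [c [c_gt0 c_le1 lin]] := normc_shift_ge_linear (inH_shift_neq0 hbarH).
have r_ge1 : 1 <= rho + 1 by rewrite lerDr ltW.
have D_gt0 : 0 < coef_growth (1 / (2 * hbar)) c.
  by rewrite divr_gt0 // mulr_gt0 // ltr_wpDl ?normc_ge0.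
have B_gt0 := lt_le_trans ltr01 (basis_growth_ge1 r_ge1).
exists (star_growth hbar c (rho + 1)) => [|a b].
  by rewrite mulr_gt0 ?exprn_gt0 // mulr_gt0 ?exprn_gt0.
have rho_le : rho <= rho + 1 by rewrite lerDl.
apply: le_trans (le_normD_rho _ (ltW rho_gt0) rho_le) _.
apply: normD_star_le => [|k l]; first exact: le_trans ler01 r_ge1.
exact: normD_starPQ_emb_le.
Qed.

End StarProduct.

Lemma ex_bilinear_delta (R : realFieldType) (alpha beta eps : R) :
  0 <= alpha -> 0 <= beta -> 0 < eps ->
  exists2 d, 0 < d & forall x y, 0 <= x -> x < d -> 0 <= y -> y < d ->
    x * (beta + y) + alpha * y < eps.
Proof.
move=> alpha_ge0 beta_ge0 eps_gt0; have sum_gt0 : 0 < alpha + beta + 1 by lra.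
pose d := Num.min 1 (eps / (alpha + beta + 1)).
have d_le1 : d <= 1 by rewrite ge_min lexx.
have d_small : d * (alpha + beta + 1) <= eps.
  by rewrite -ler_pdivlMr // ge_min lexx orbT.
exists d => [|x y x_ge0 ltxd y_ge0 ltyd]; first by rewrite lt_min ltr01 divr_gt0.
have h1 : x * (beta + y) <= x * (beta + 1) by rewrite ler_wpM2l //; lra.
have h2 : x * (beta + 1) < d * (beta + 1) by rewrite ltr_pM2r //; lra.
have h3 : alpha * y <= alpha * d by rewrite ler_wpM2l // ltW.
nra.
Qed.

Theorem theorem3p7 (R : realType) (n : nat) (hbar : R[i]) :
  (1 <= n)%N -> inH hbar -> star_continuous n hbar.
Proof.
move=> _ hbarH a b rho eps rho_gt0 eps_gt0.
have [E E_gt0 star_le] := normD_star_bounded n hbarH rho_gt0.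
have E_ge0 := ltW E_gt0.
have [d d_gt0 small] :=
  ex_bilinear_delta (normD_ge0 a E_ge0) (normD_ge0 b E_ge0) eps_gt0.
exists [:: E], d; split=> //=; first by rewrite E_gt0.
move=> a' b' /(_ E (mem_head _ _)) [lt_a lt_b].
rewrite starB; apply: le_lt_trans (ler_normD_add _ _ (ltW rho_gt0)) _.
apply: le_lt_trans (lerD (star_le _ _) (star_le _ _)) _.
apply: le_lt_trans (small _ _ (normD_ge0 _ E_ge0) lt_a (normD_ge0 _ E_ge0) lt_b).
rewrite lerD2r ler_wpM2l ?normD_ge0 //.
by rewrite -{1}(subrK b b') addrC ler_normD_add.
Qed.
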